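(* Let $E$ be a JB$^*$-triple in which tripotents are norm-total, and let $T:E\to E$ be a bounded linear map. The following are equivalent: (a) $T$ is a triple derivation; (b) $T$ is triple derivable at orthogonal pairs and, for each tripotent $e\in E$, the element $P_2(e)T(e)$ is skew-symmetric in the JB$^*$-algebra $E_2(e)$, i.e. $(P_2(e)T(e))^{*_e}=-P_2(e)T(e)$.
   Context: A JB$^*$-triple is a complex Banach space $E$ with a continuous triple product $\{\cdot,\cdot,\cdot\}$, bilinear and symmetric in the outer variables and conjugate-linear in the middle one, satisfying the Jordan identity $L(a,b)L(x,y)=L(x,y)L(a,b)+L(L(a,b)x,y)-L(x,L(b,a)y)$, such that $L(a,a)$ is hermitian with non-negative spectrum and $\|\{a,a,a\}\|=\|a\|^3$, where $L(a,b)x=\{a,b,x\}$. Elements $a,b$ are orthogonal ($a\perp b$) if $L(a,b)=0$. A linear map $T$ is triple derivable at orthogonal pairs if $\{T(a),b,c\}+\{a,T(b),c\}+\{a,b,T(c)\}=0$ for all $a,b,c$ with $a\perp b$. A triple derivation satisfies $\delta\{a,b,c\}=\{\delta a,b,c\}+\{a,\delta b,c\}+\{a,b,\delta c\}$. A tripotent is $e$ with $\{e,e,e\}=e$; $E_j(e)=\{x:\{e,e,x\}=\tfrac j2x\}$ ($j=0,1,2$), $E=E_2(e)\oplus E_1(e)\oplus E_0(e)$, with Peirce projections $P_j(e)$. $E_2(e)$ is a unital JB$^*$-algebra with unit $e$, product $x\circ_e y=\{x,e,y\}$ and involution $x^{*_e}=\{e,x,e\}$. Tripotents are norm-total in $E$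 if every element is a norm limit of finite linear combinations of mutually orthogonal tripotents. *)

From mathcomp Require Import all_boot all_order all_algebra.
From mathcomp Require Import all_classical all_reals all_analysis.
From mathcomp Require Import complex.
Import Order.TTheory GRing.Theory Num.Theory.
Set Implicit Arguments. Unset Strict Implicit. Unset Printing Implicit Defensive.
Local Open Scope ring_scope.
Local Open Scope complex_scope.

Section JBDefs.
Variable R : realType.
Variable E : completeNormedModType R[i].

(* Numerical-range definition of a hermitian operator (Bonsall--Duncan):
   f(Sx) is real whenever |x| = 1, f is a linear functional of norm <= 1 and f x = 1. *)
Definition hermitian_op (S : E -> E) : Prop :=
  forall (x : E) (f : E -> R[i]),
    `|x| = 1 ->
    (forall (a : R[i]) (y z : E), f (a *: y + z) = a * f y + f z) ->
    (forall y, `|f y| <= `|y|) ->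
    f x = 1 ->
    f (S x) \is Num.real.

(* sigma(S) is contained in [0, +oo): S - l Id is invertible for every l outside [0,+oo).
   (For bounded S on a Banach space, bijectivity = invertibility in B(E), by the open mapping theorem.) *)
Definition nonneg_spectrum (S : E -> E) : Prop :=
  forall l : R[i], ~~ (0 <= l) -> bijective (fun x => S x - l *: x).

Record JBtriple := {
  tp : E -> E -> E -> E;
  tp_linl : forall (a : R[i]) x x' y z, tp (a *: x + x') y z = a *: tp x y z + tp x' y z;
  tp_symm : forall x y z, tp x y z = tp z y x;
  tp_conjm : forall (a : R[i]) x y y' z, tp x (a *: y + y') z = a^* *: tp x y z + tp x y' z;
  tp_cont : continuous (fun p : E * (E * E) => tp p.1 p.2.1 p.2.2);
  tp_jordan : forall a b x y z,
    tp a b (tp x y z) = tp x y (tp a b z) + tp (tp a b x) y z - tp x (tp b a y) z;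
  tp_herm : forall a, hermitian_op (tp a a);
  tp_spec : forall a, nonneg_spectrum (tp a a);
  tp_norm : forall a, `|tp a a a| = `|a| ^+ 3
}.

Variable J : JBtriple.
Local Notation "{| x , y , z |}" := (tp J x y z).

Definition orthogonal (a b : E) : Prop := forall x, {| a, b, x |} = 0.

Definition tripotent (e : E) : Prop := {| e, e, e |} = e.

(* Peirce subspaces E_j(e) = { x | {e,e,x} = j/2 x } *)
Definition peirce2 (e x : E) : Prop := {| e, e, x |} = x.
Definition peirce1 (e x : E) : Prop := {| e, e, x |} = (2%:R)^-1 *: x.
Definition peirce0 (e x : E) : Prop := {| e, e, x |} = 0.

(* y = P_2(e) x : y is the E_2(e)-component of x in E = E_2(e) + E_1(e) + E_0(e) *)
Definition peirce2_proj (e x y : E) : Prop :=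
  peirce2 e y /\ exists y1 y0, peirce1 e y1 /\ peirce0 e y0 /\ x = y + y1 + y0.

Definition star_e (e x : E) : E := {| e, x, e |}.

Definition bounded_linear (T : E -> E) : Prop :=
  (forall (a : R[i]) x y, T (a *: x + y) = a *: T x + T y) /\
  exists M : R[i], forall x, `|T x| <= M * `|x|.

Definition triple_derivation (T : E -> E) : Prop :=
  forall a b c, T {| a, b, c |} = {| T a, b, c |} + {| a, T b, c |} + {| a, b, T c |}.

Definition triple_derivable_orth (T : E -> E) : Prop :=
  forall a b c, orthogonal a b ->
    {| T a, b, c |} + {| a, T b, c |} + {| a, b, T c |} = 0.

Definition tripotents_norm_total : Prop :=
  forall (x : E) (eps : R[i]), 0 < eps ->
    exists (n : nat) (c : 'I_n -> R[i]) (u : 'I_n -> E),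
      (forall i, tripotent (u i)) /\
      (forall i j, i != j -> orthogonal (u i) (u j)) /\
      `|x - \sum_(i < n) c i *: u i| < eps.

End JBDefs.

From Pilot Require Import Defs.
From mathcomp Require Import all_boot all_order all_algebra.
From mathcomp Require Import all_classical all_reals all_analysis.
From mathcomp Require Import complex.
From mathcomp Require Import ring.
Import Order.TTheory GRing.Theory Num.Theory.
Set Implicit Arguments. Unset Strict Implicit. Unset Printing Implicit Defensive.
Local Open Scope ring_scope.
Local Open Scope complex_scope.

(* Write D(a,b,c) = T{a,b,c} - {Ta,b,c} - {a,Tb,c} - {a,b,Tc} for the defect of
   T from being a triple derivation.  The direction (a) => (b) is immediate from
   the Peirce calculus of a tripotent e: applying the derivation identity to
   e = {e,e,e} shows that P_0(e)T(e) = P_2(e)T(e) + Q(e)P_2(e)T(e), and applying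
   L(e,e), which kills E_0(e) and fixes the range of Q(e), gives the skewness.

   For (b) => (a) we show, again by Peirce arithmetic, that derivability at
   orthogonal pairs forces P_0(e)T(e) = 0, after which skewness of P_2(e)T(e)
   yields D(e,e,e) = 0.  Since D is linear, conjugate-linear, linear in its
   three variables and vanishes at orthogonal pairs, D(x,x,x) = 0 for every
   finite combination x of mutually orthogonal tripotents; by continuity and
   norm-totality D(x,x,x) = 0 for all x, and polarization gives D = 0. *)

Definition semilinear_wrt (K : pzRingType) (V W : lmodType K)
    (phi : K -> K) (f : V -> W) : Prop :=
  forall a x y, f (a *: x + y) = phi a *: f x + f y.

Section Semilinear.
Variables (K : pzRingType) (V W : lmodType K) (phi : K -> K) (f : V -> W).
Hypotheses (phi1 : phi 1 = 1) (f_lin : semilinear_wrt phi f).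

Lemma semilinD x y : f (x + y) = f x + f y.
Proof. by have := f_lin 1 x y; rewrite !scale1r phi1 scale1r. Qed.

Lemma semilin0 : f 0 = 0.
Proof. by apply/(addrI (f 0)); rewrite -semilinD !addr0. Qed.

Lemma semilinZ a x : f (a *: x) = phi a *: f x.
Proof. by have := f_lin a x 0; rewrite !addr0 semilin0 addr0. Qed.

Lemma semilinN x : f (- x) = - f x.
Proof. by apply/(addrI (f x)); rewrite -semilinD !subrr semilin0. Qed.

Lemma semilin_sum0 n (c : 'I_n -> K) (u : 'I_n -> V) :
  (forall i, f (u i) = 0) -> f (\sum_(i < n) c i *: u i) = 0.
Proof.
move=> fu0; elim/big_ind: _ => [|x y fx fy|i _]; first exact: semilin0.
  by rewrite semilinD fx fy addr0.
by rewrite semilinZ fu0 scaler0.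
Qed.
End Semilinear.

Section SemilinearClosure.
Variables (K : pzRingType) (U V W : lmodType K).

Lemma semilin_comp (phi psi : K -> K) (f : V -> W) (g : U -> V) :
  semilinear_wrt phi f -> semilinear_wrt psi g ->
  semilinear_wrt (fun a => phi (psi a)) (fun x => f (g x)).
Proof. by move=> flin glin a x y; rewrite glin flin. Qed.

Lemma semilin_add (phi : K -> K) (f g : V -> W) :
  semilinear_wrt phi f -> semilinear_wrt phi g ->
  semilinear_wrt phi (fun x => f x + g x).
Proof. by move=> flin glin a x y; rewrite flin glin scalerDr addrACA. Qed.

Lemma semilin_sub (phi : K -> K) (f g : V -> W) :
  semilinear_wrt phi f -> semilinear_wrt phi g ->
  semilinear_wrt phi (fun x => f x - g x).
Proof. by move=> flin glin a x y; rewrite flin glin scalerBr opprD addrACA. Qed.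
End SemilinearClosure.

Section CharZero.
Variables (F : numFieldType) (V : lmodType F).

Lemma mulrn_inj n (u v : V) : (0 < n)%N -> u *+ n = v *+ n -> u = v.
Proof.
move=> n_gt0 /(congr1 (fun x => (n%:R : F)^-1 *: x)).
by rewrite -!scaler_nat !scalerA mulVf ?scale1r // pnatr_eq0 -lt0n.
Qed.

Lemma mulr2n_eq0 (v : V) : v *+ 2 = 0 -> v = 0.
Proof. by move=> v2; apply: (@mulrn_inj 2) => //; rewrite v2 mul0rn. Qed.

Lemma half_twice (v : V) : (2%:R^-1 *: v) *+ 2 = v.
Proof. by rewrite -scaler_nat scalerA mulfV ?scale1r // pnatr_eq0. Qed.

Lemma half_fixpoint (v : V) : v = 2%:R^-1 *: v -> v = 0.
Proof.
move=> vh; apply: (@addrI _ v).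
by rewrite -mulr2n {1}vh half_twice addr0.
Qed.
End CharZero.

Section TripleProduct.
Variables (R : realType) (E : completeNormedModType R[i]).
Context {J : JBtriple E}.
Local Notation "{| x , y , z |}" := (tp J x y z).
Local Notation id1 := (erefl (1 : R[i])).

Lemma tp_semilinl y z : semilinear_wrt id (fun x => {| x, y, z |}).
Proof. by move=> a x x'; rewrite tp_linl. Qed.

Lemma tp_semilinm x z : semilinear_wrt conjc (fun y => {| x, y, z |}).
Proof. by move=> a y y'; rewrite tp_conjm. Qed.

Lemma tp_semilinr x y : semilinear_wrt id (fun z => {| x, y, z |}).
Proof. by move=> a z z'; rewrite !(tp_symm J x) tp_linl. Qed.

Lemma tp0l y z : {| 0, y, z |} = 0.
Proof. exact: semilin0 id1 (tp_semilinl y z). Qed.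
Lemma tpDl x x' y z : {| x + x', y, z |} = {| x, y, z |} + {| x', y, z |}.
Proof. exact: semilinD id1 (tp_semilinl y z) x x'. Qed.
Lemma tpZl a x y z : {| a *: x, y, z |} = a *: {| x, y, z |}.
Proof. exact: semilinZ id1 (tp_semilinl y z) a x. Qed.

Lemma tp0m x z : {| x, 0, z |} = 0.
Proof. exact: semilin0 (conjc1 R) (tp_semilinm x z). Qed.
Lemma tpDm x y y' z : {| x, y + y', z |} = {| x, y, z |} + {| x, y', z |}.
Proof. exact: semilinD (conjc1 R) (tp_semilinm x z) y y'. Qed.
Lemma tpZm a x y z : {| x, a *: y, z |} = conjc a *: {| x, y, z |}.
Proof. exact: semilinZ (conjc1 R) (tp_semilinm x z) a y. Qed.

Lemma tp0r x y : {| x, y, 0 |} = 0.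
Proof. exact: semilin0 id1 (tp_semilinr x y). Qed.
Lemma tpDr x y z z' : {| x, y, z + z' |} = {| x, y, z |} + {| x, y, z' |}.
Proof. exact: semilinD id1 (tp_semilinr x y) z z'. Qed.
Lemma tpZr a x y z : {| x, y, a *: z |} = a *: {| x, y, z |}.
Proof. exact: semilinZ id1 (tp_semilinr x y) a z. Qed.
Lemma tpNr x y z : {| x, y, - z |} = - {| x, y, z |}.
Proof. exact: semilinN id1 (tp_semilinr x y) z. Qed.

(* The norm axiom makes the cube map x |-> {x,x,x} anisotropic. *)
Lemma tp_cube_eq0 x : {| x, x, x |} = 0 -> x = 0.
Proof.
move/(congr1 (fun v => `|v|)); rewrite tp_norm normr0 => /eqP.
by rewrite expf_eq0 /= normr_eq0 => /eqP.
Qed.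
End TripleProduct.

Section Peirce.
Variables (R : realType) (E : completeNormedModType R[i]) (J : JBtriple E).
Local Notation "{| x , y , z |}" := (tp J x y z).
Variable e : E.
Hypothesis te : tripotent J e.
Local Notation L := (tp J e e).
Local Notation Q w := {| e, w, e |}.

Lemma jordan_Q w z : {| e, w, z |} + {| Q w, e, z |} = {| e, L w, z |} *+ 2.
Proof.
have h1 := tp_jordan J e e e w z; rewrite te in h1.
have h2 := tp_jordan J e w e e z; rewrite (tp_symm J w) in h2.
move: h1 h2; set A := L _; set X := {| e, w, z |}; set Y := {| Q w, e, z |}.
set Z := {| e, L w, z |}; set B := {| e, w, L z |} => h1 h2.
apply/eqP; rewrite -subr_eq0; apply/eqP/(addrI A).
rewrite addr0 [in RHS]h1 h2 mulr2n opprD addrA (addrC X Y) !addrA.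
by rewrite [A + Y - Z + X]addrAC.
Qed.

Lemma L_Q_expand w : L (Q w) = Q w *+ 2 - Q (L w).
Proof. by rewrite tp_jordan te mulr2n. Qed.

Lemma Q_L w : Q (L w) = Q w.
Proof.
have := jordan_Q w e; rewrite (tp_symm J (Q w)) L_Q_expand => h.
apply/esym/(@mulrn_inj _ _ 3) => //.
by rewrite [in RHS]mulrSr -h addrA subrK -mulrS.
Qed.

Lemma L_Q w : L (Q w) = Q w.
Proof. by rewrite L_Q_expand Q_L mulr2n addrK. Qed.

Lemma Q_Q w : Q (Q w) = L (L w) *+ 2 - L w.
Proof.
have := tp_jordan J w e e e e.
rewrite te (tp_symm J w) (tp_symm J (L w)) -mulr2n => h.
by rewrite [X in _ - X]h opprB addrC subrK.
Qed.

(* The cubic identity 2L^3 = 3L^2 - L, whose roots 1, 1/2, 0 give the Peirce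
   decomposition. *)
Lemma L_cubic w : L (L (L w)) *+ 2 = L (L w) *+ 3 - L w.
Proof.
have := L_Q (Q w); rewrite Q_Q tpDr tpNr -(scaler_nat 2) tpZr !scaler_nat => h.
by rewrite -(subrK (L (L w)) (L (L (L w)) *+ 2)) h addrAC -mulrSr.
Qed.

Lemma L_cube w : L (L (L w)) = (3%:R / 2%:R) *: L (L w) - 2%:R^-1 *: L w.
Proof.
have := L_cubic w; rewrite -[_ *+ 2]scaler_nat -[_ *+ 3]scaler_nat.
move/(congr1 (fun v => 2%:R^-1 *: v)); rewrite scalerA mulVf ?pnatr_eq0 // scale1r => ->.
by rewrite scalerBr scalerA mulrC.
Qed.

(* The element (a + bL + cL^2) x; by the cubic identity such elements are
   closed under L, so the Peirce projections can be computed on coefficients. *)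
Definition polyL x (a b c : R[i]) : E := a *: x + b *: L x + c *: L (L x).

Lemma polyL_L x a b c :
  L (polyL x a b c) = polyL x 0 (a - c / 2%:R) (b + c * (3%:R / 2%:R)).
Proof.
rewrite /polyL !tpDr !tpZr L_cube scalerBr !scalerA scale0r add0r !scalerDl.
by rewrite scaleNr [_ - _ *: L x]addrC addrACA.
Qed.

Lemma polyL_add x a b c a' b' c' :
  polyL x a b c + polyL x a' b' c' = polyL x (a + a') (b + b') (c + c').
Proof. by rewrite /polyL !scalerDl addrACA (addrACA (a *: x)). Qed.

Lemma polyLZ x k a b c : k *: polyL x a b c = polyL x (k * a) (k * b) (k * c).
Proof. by rewrite /polyL !scalerDr !scalerA. Qed.

Lemma polyL_id x : polyL x 1 0 0 = x.
Proof. by rewrite /polyL scale1r !scale0r !addr0. Qed.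

Lemma polyL0 x : polyL x 0 0 0 = 0.
Proof. by rewrite /polyL !scale0r !addr0. Qed.

Definition pc2 x := polyL x 0 (-1) 2%:R.
Definition pc1 x := polyL x 0 4%:R (- 4%:R).
Definition pc0 x := polyL x 1 (- 3%:R) 2%:R.

Lemma L_pc2 x : L (pc2 x) = pc2 x.
Proof. by rewrite /pc2 polyL_L; congr polyL; field. Qed.

Lemma L_pc1 x : L (pc1 x) = 2%:R^-1 *: pc1 x.
Proof. by rewrite /pc1 polyL_L polyLZ; congr polyL; field. Qed.

Lemma L_pc0 x : L (pc0 x) = 0.
Proof. by rewrite /pc0 polyL_L -(polyL0 x); congr polyL; field. Qed.

Lemma pc_sum x : x = pc2 x + pc1 x + pc0 x.
Proof. by rewrite !polyL_add -{1}(polyL_id x); congr polyL; ring. Qed.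

Lemma pc2_peirce2_proj x : peirce2_proj J e x (pc2 x).
Proof.
split; first exact: L_pc2.
by exists (pc1 x), (pc0 x); split; [exact: L_pc1 | split; [exact: L_pc0 | exact: pc_sum]].
Qed.

Lemma Q_peirce0 w : L w = 0 -> Q w = 0.
Proof. by move=> w0; rewrite -Q_L w0 tp0m. Qed.

Lemma Q_peirce1 w : L w = 2%:R^-1 *: w -> Q w = 0.
Proof.
move=> w1; apply: half_fixpoint.
by rewrite -{1}Q_L w1 tpZm conjc_inv conjc_nat.
Qed.

Lemma Q_Q_peirce2 w : L w = w -> Q (Q w) = w.
Proof. by move=> w2; rewrite Q_Q !w2 mulr2n addrK. Qed.

Lemma peirce0_orthogonal w : L w = 0 -> Defs.orthogonal J e w.
Proof.
move=> w0 z; have := jordan_Q w z.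
by rewrite w0 Q_peirce0 // tp0l tp0m mul0rn addr0.
Qed.

Lemma peirce_rule x y z (al be ga : R[i]) :
  L x = al *: x -> L y = be *: y -> conjc be = be -> L z = ga *: z ->
  L {| x, y, z |} = (al - be + ga) *: {| x, y, z |}.
Proof.
move=> xal ybe be_real zga.
rewrite tp_jordan xal ybe zga tpZr tpZl tpZm be_real.
by rewrite !scalerDl scaleNr [ga *: _ + _]addrC addrAC.
Qed.

Lemma peirce0_component_unique s0 s1 s2 :
  L s0 = 0 -> L s1 = 2%:R^-1 *: s1 -> L s2 = s2 -> s0 + s1 + s2 = 0 -> s0 = 0.
Proof.
move=> s0P s1P s2P sum0.
have L_sum : 2%:R^-1 *: s1 + s2 = 0.
  by have := congr1 L sum0; rewrite !tpDr s0P s1P s2P add0r tp0r.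
have LL_sum : 2%:R^-1 *: (2%:R^-1 *: s1) + s2 = 0.
  by have := congr1 L L_sum; rewrite tpDr tpZr s1P s2P tp0r.
have s1_0 : s1 = 0.
  have /half_fixpoint/eqP : 2%:R^-1 *: s1 = 2%:R^-1 *: (2%:R^-1 *: s1).
    by apply: (@addIr _ s2); rewrite L_sum LL_sum.
  by rewrite scaler_eq0 invr_eq0 pnatr_eq0 /= => /eqP.
move: L_sum sum0; rewrite s1_0 scaler0 add0r => ->.
by rewrite !addr0.
Qed.

(* Q(e) is injective on E_2(e) and vanishes on E_1(e) + E_0(e), so it detects P_2(e). *)
Lemma pc2_Q0 v : Q v = 0 -> pc2 v = 0.
Proof.
rewrite {1}(pc_sum v) (tpDm _ (pc2 v + pc1 v)) (tpDm _ (pc2 v)).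
rewrite (Q_peirce1 (L_pc1 v)) (Q_peirce0 (L_pc0 v)) !addr0.
by move=> Q2; rewrite -(Q_Q_peirce2 (L_pc2 v)) Q2 tp0m.
Qed.

(* If x = 2{x,e,e} + {e,x,e}, as is the case for x = delta(e) with delta a
   triple derivation, then P_2(e) x is skew for the involution of E_2(e). *)
Lemma skew_of_derivation_identity x y y1 y0 :
  {| x, e, e |} + {| e, x, e |} + {| e, e, x |} = x ->
  L y = y -> L y1 = 2%:R^-1 *: y1 -> L y0 = 0 -> x = y + y1 + y0 -> Q y = - y.
Proof.
move=> dx y2 y11 y00 xdec.
move: dx; rewrite (tp_symm J x) xdec !tpDr !tpDm y2 y11 y00 addr0.
rewrite (Q_peirce1 y11) (Q_peirce0 y00) !addr0 => dx.
have y0E : y0 = y + Q y.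
  apply: (@addrI _ (y + y1)); rewrite -dx -[in RHS](half_twice y1) mulr2n.
  by rewrite addrAC -!addrA [y + (_ + Q y)]addrCA.
have : y + Q y = 0 by rewrite -{1}y2 -(L_Q y) -tpDr -y0E y00.
by move/eqP; rewrite addrC addr_eq0 => /eqP.
Qed.

Lemma derivation_identity_of_skew a b :
  L a = a -> Q a = - a -> L b = 2%:R^-1 *: b ->
  {| a + b, e, e |} + {| e, a + b, e |} + {| e, e, a + b |} = a + b.
Proof.
move=> a2 a_skew b1.
rewrite (tp_symm J (a + b)) tpDr tpDm a2 b1 a_skew (Q_peirce1 b1) addr0.
by rewrite -addrA addKr -addrA -mulr2n half_twice.
Qed.

Section DerivableAtOrthogonalPairs.
Variable T : E -> E.
Hypothesis T_orth : triple_derivable_orth J T.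

(* Derivability at the orthogonal pair (e, w), w in E_0(e), tested at e. *)
Lemma derivable_Q_peirce0 w : L w = 0 -> Q (T w) = 0.
Proof.
move=> w0; have ew := peirce0_orthogonal w0.
by have := T_orth e ew; rewrite (tp_symm J (T e)) !ew add0r addr0.
Qed.

Lemma derivable_peirce0_vanish y y1 y0 :
  T e = y + y1 + y0 -> L y = y -> L y1 = 2%:R^-1 *: y1 -> L y0 = 0 -> y0 = 0.
Proof.
move=> Te y22 y11 y00.
have ey0 := peirce0_orthogonal y00.
set w := T y0; have w2 : pc2 w = 0 := pc2_Q0 (derivable_Q_peirce0 y00).
have := T_orth y0 ey0; rewrite ey0 addr0 Te -/w (pc_sum w) w2 add0r.
rewrite !tpDl tpDm.
set A := {| y, y0, y0 |}; set B := {| y1, y0, y0 |}; set C := {| y0, y0, y0 |}.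
set D := {| e, pc1 w, y0 |}; set F := {| e, pc0 w, y0 |} => sum0.
have e2 : L e = 1 *: e by rewrite scale1r.
have y2 : L y = 1 *: y by rewrite scale1r.
have y0_0 : L y0 = 0 *: y0 by rewrite scale0r.
have pc0_0 : L (pc0 w) = 0 *: pc0 w by rewrite scale0r L_pc0.
have real0 : conjc (0 : R[i]) = 0 by rewrite conjc0.
have real_half : conjc (2%:R^-1 : R[i]) = 2%:R^-1 by rewrite conjc_inv conjc_nat.
have C0 : L C = 0.
  by rewrite (peirce_rule y0_0 y0_0 real0 y0_0) subrr addr0 scale0r.
have BD1 : L (B + D) = 2%:R^-1 *: (B + D).
  rewrite tpDr (peirce_rule y11 y0_0 real0 y0_0) (peirce_rule e2 (L_pc1 w) real_half y0_0).
  have -> : (1 - 2%:R^-1 : R[i]) = 2%:R^-1 by field.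
  by rewrite !subr0 !addr0 -scalerDr.
have AF2 : L (A + F) = A + F.
  rewrite tpDr (peirce_rule y2 y0_0 real0 y0_0) (peirce_rule e2 pc0_0 real0 y0_0).
  by rewrite !subr0 !addr0 !scale1r.
apply: (tp_cube_eq0 (J := J)); apply: (peirce0_component_unique C0 BD1 AF2).
rewrite -sum0 [A + B + C]addrC -!addrA; congr (_ + _).
by rewrite [RHS]addrCA [A + (D + F)]addrCA.
Qed.

Lemma derivation_identity_at_tripotent :
  (forall y, peirce2_proj J e (T e) y -> star_e J e y = - y) ->
  {| T e, e, e |} + {| e, T e, e |} + {| e, e, T e |} = T e.
Proof.
move=> T_skew; set x := T e.
have x0 : pc0 x = 0 := derivable_peirce0_vanish (pc_sum x) (L_pc2 x) (L_pc1 x) (L_pc0 x).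
have x2 : Q (pc2 x) = - pc2 x := T_skew _ (pc2_peirce2_proj x).
have -> : x = pc2 x + pc1 x by rewrite {1}(pc_sum x) x0 addr0.
exact: derivation_identity_of_skew (L_pc2 x) x2 (L_pc1 x).
Qed.
End DerivableAtOrthogonalPairs.
End Peirce.

(* The imaginary unit is not self-conjugate, which separates the symmetric and
   skew parts of a sesquilinear expression. *)
Lemma conjc_i (R : rcfType) : conjc ('i : R[i]) = - 'i.
Proof. by apply/eqP; rewrite eq_complex /= !eqxx /= oppr0 eqxx. Qed.

Section Polarization.
Variables (R : realType) (V W : lmodType R[i]) (D : V -> V -> V -> W).
Hypotheses (D_linl : forall y z, semilinear_wrt id (fun x => D x y z))
  (D_conjm : forall x z, semilinear_wrt conjc (fun y => D x y z))
  (D_sym : forall x y z, D x y z = D z y x)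
  (D_diag : forall x, D x x x = 0).
Local Notation id1 := (erefl (1 : R[i])).

Let DDl x x' y z : D (x + x') y z = D x y z + D x' y z.
Proof. exact: semilinD id1 (D_linl y z) x x'. Qed.
Let DNl x y z : D (- x) y z = - D x y z.
Proof. exact: semilinN id1 (D_linl y z) x. Qed.
Let DDm x y y' z : D x (y + y') z = D x y z + D x y' z.
Proof. exact: semilinD (conjc1 R) (D_conjm x z) y y'. Qed.
Let DZm a x y z : D x (a *: y) z = conjc a *: D x y z.
Proof. exact: semilinZ (conjc1 R) (D_conjm x z) a y. Qed.
Let DNm x y z : D x (- y) z = - D x y z.
Proof. exact: semilinN (conjc1 R) (D_conjm x z) y. Qed.
Let DDr x y z z' : D x y (z + z') = D x y z + D x y z'.
Proof. by rewrite D_sym DDl !(D_sym _ y x). Qed.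
Let DZr a x y z : D x y (a *: z) = a *: D x y z.
Proof. by rewrite D_sym (semilinZ id1 (D_linl y x)) D_sym. Qed.
Let DNr x y z : D x y (- z) = - D x y z.
Proof. by rewrite -scaleN1r DZr scaleN1r. Qed.

(* The polar form obtained by expanding D(x + y, x + y, x + y). *)
Let A x y := D x x y *+ 2 + D x y x.

Lemma polar_sym x y : A x y + A y x = 0.
Proof.
have := D_diag (x + y).
rewrite DDl !DDm !DDr !D_diag (D_sym y x x) (D_sym y y x) add0r addr0 => <-.
by rewrite /A (D_sym y y x) !mulr2n (AC (3*3) ((1*(3*4))*((2*6)*5))).
Qed.

(* Replacing y by -y separates A x y from A y x. *)
Lemma polar_A x y : A x y = 0.
Proof.
have := polar_sym x (- y); rewrite /A !(DNl, DNm, DNr) !opprK mulNrn -opprD.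
move/eqP; rewrite addrC subr_eq0 => /eqP Ayx.
by apply: mulr2n_eq0; rewrite mulr2n -{2}Ayx; apply: polar_sym.
Qed.

(* Replacing y by i y separates D x x y from D x y x. *)
Lemma polar_mid x y : D x y x = 0.
Proof.
have := polar_A x ('i *: y); rewrite /A DZr DZm conjc_i scalerMnr scaleNr -scalerBr.
move/eqP; rewrite scaler_eq0 (negbTE (neq0Ci _)) subr_eq0 /= => /eqP Bxy.
by apply: mulr2n_eq0; rewrite mulr2n -{1}Bxy; apply: polar_A.
Qed.

Lemma polarization x y z : D x y z = 0.
Proof.
have := polar_mid (x + z) y; rewrite DDl !DDr !polar_mid add0r addr0.
by rewrite (D_sym z y x) -mulr2n; apply: mulr2n_eq0.
Qed.
End Polarization.

Section DerivationDefect.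
Variables (R : realType) (E : completeNormedModType R[i]) (J : JBtriple E).
Local Notation "{| x , y , z |}" := (tp J x y z).
Local Notation id1 := (erefl (1 : R[i])).
Variable T : E -> E.
Hypothesis T_lin : semilinear_wrt id T.

Definition defect a b c :=
  T {| a, b, c |} - ({| T a, b, c |} + {| a, T b, c |} + {| a, b, T c |}).

Lemma defect_linl b c : semilinear_wrt id (fun a => defect a b c).
Proof.
apply: semilin_sub; first exact: (semilin_comp T_lin (tp_semilinl b c)).
apply: semilin_add; first apply: semilin_add.
- exact: (semilin_comp (tp_semilinl b c) T_lin).
- exact: tp_semilinl.
- exact: tp_semilinl.
Qed.

Lemma defect_conjm a c : semilinear_wrt conjc (fun b => defect a b c).
Proof.
apply: semilin_sub; first exact: (semilin_comp T_lin (tp_semilinm a c)).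
apply: semilin_add; first apply: semilin_add.
- exact: tp_semilinm.
- exact: (semilin_comp (tp_semilinm a c) T_lin).
- exact: tp_semilinm.
Qed.

Lemma defect_sym a b c : defect a b c = defect c b a.
Proof.
rewrite /defect !(tp_symm J a) (tp_symm J (T a)).
by rewrite [_ + _ + _](AC 3 (3*2*1)).
Qed.

Section UnderHypotheses.
Hypothesis T_orth : triple_derivable_orth J T.
Hypothesis T_skew : forall e : E, tripotent J e ->
  forall y : E, peirce2_proj J e (T e) y -> star_e J e y = - y.

Lemma defect_orthogonal a b c : Defs.orthogonal J a b -> defect a b c = 0.
Proof.
move=> ab; rewrite /defect (T_orth c ab) ab.
by rewrite (semilin0 id1 T_lin) subr0.
Qed.

Lemma defect_tripotent e : tripotent J e -> defect e e e = 0.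
Proof.
move=> te; rewrite /defect (derivation_identity_at_tripotent te T_orth (T_skew te)).
by rewrite te subrr.
Qed.

Lemma defect_diag_combination n (c : 'I_n -> R[i]) (u : 'I_n -> E) :
  (forall i, tripotent J (u i)) ->
  (forall i j, i != j -> Defs.orthogonal J (u i) (u j)) ->
  let x := \sum_(i < n) c i *: u i in defect x x x = 0.
Proof.
move=> u_trip u_orth x.
apply: (semilin_sum0 id1 (defect_linl x x)) => i.
apply: (semilin_sum0 (conjc1 R) (defect_conjm (u i) x)) => j.
rewrite defect_sym; apply: (semilin_sum0 id1 (defect_linl (u j) (u i))) => k.
have [<-|ij] := eqVneq i j; last by rewrite defect_sym; exact: defect_orthogonal (u_orth _ _ ij).
have [<-|ik] := eqVneq i k; first exact: defect_tripotent.
by apply: defect_orthogonal; apply: u_orth; rewrite eq_sym.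
Qed.
End UnderHypotheses.
End DerivationDefect.

Section Continuity.
Variables (K : numFieldType) (V W : normedModType K).

Lemma continuous_vanish_dense (g : V -> W) x :
  {for x, continuous g} ->
  (forall eps : K, 0 < eps -> exists z, g z = 0 /\ `|x - z| < eps) -> g x = 0.
Proof.
move=> gx dense; apply/eqP; apply/negPn/negP => gx0.
have gx_pos : 0 < `|g x| by rewrite normr_gt0.
move/cvgrPdist_lt: gx => /(_ _ gx_pos) /nbhs_normP [d /= d0 near_x].
have [z [gz0 xz]] := dense d d0.
by have := near_x z xz; rewrite /= gz0 subr0 ltxx.
Qed.

Local Notation id1 := (erefl (1 : K)).

Lemma semilinear_bounded_continuous (T : V -> W) (M : K) :
  semilinear_wrt id T -> (forall x, `|T x| <= M * `|x|) -> continuous T.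
Proof.
move=> T_lin T_bd x.
have T_bd' v : `|T v| <= (`|M| + 1) * `|v|.
  have Mv_ge0 : 0 <= M * `|v| := le_trans (normr_ge0 _) (T_bd v).
  apply: (le_trans (T_bd v)); rewrite -(ger0_norm Mv_ge0) normrM normr_id.
  by rewrite ler_wpM2r ?lerDl.
apply/cvgrPdist_lt => eps eps0.
have M1_gt0 : 0 < `|M| + 1 by rewrite ltr_wpDl.
apply/nbhs_normP; exists (eps / (`|M| + 1)); first by rewrite /= divr_gt0.
move=> t /= xt; rewrite -(semilinN id1 T_lin) -(semilinD id1 T_lin).
apply: (le_lt_trans (T_bd' _)).
by rewrite -ltr_pdivlMl // mulrC.
Qed.
End Continuity.

Section DefectContinuity.
Variables (R : realType) (E : completeNormedModType R[i]) (J : JBtriple E).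
Local Notation "{| x , y , z |}" := (tp J x y z).

Lemma tp_continuous (f g h : E -> E) x :
  {for x, continuous f} -> {for x, continuous g} -> {for x, continuous h} ->
  {for x, continuous (fun t => {| f t, g t, h t |})}.
Proof.
move=> fc gc hc.
have fgh_c : {for x, continuous (fun t => (f t, (g t, h t)))}.
  exact: cvg_pair fc (cvg_pair gc hc).
have := continuous_comp fgh_c (@tp_cont _ _ J _).
exact.
Qed.

Lemma defect_diag_continuous (T : E -> E) :
  bounded_linear T -> continuous (fun x => defect J T x x x).
Proof.
move=> [T_lin [M T_bd]] x.
have Tc := semilinear_bounded_continuous T_lin T_bd.
have idc : {for x, continuous (fun t : E => t)} := cvg_id.
apply: cvgB.
  have := continuous_comp (tp_continuous idc idc idc) (Tc _).
  exact.
apply: cvgD; first apply: cvgD.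
- exact: (tp_continuous (Tc x) idc idc).
- exact: (tp_continuous idc (Tc x) idc).
- exact: (tp_continuous idc idc (Tc x)).
Qed.
End DefectContinuity.

Section Directions.
Variables (R : realType) (E : completeNormedModType R[i]) (J : JBtriple E).
Variable T : E -> E.
Local Notation id1 := (erefl (1 : R[i])).

(* (a) => (b), first half: T{a,b,c} = T 0 = 0 when a is orthogonal to b. *)
Lemma derivation_derivable_orth :
  semilinear_wrt id T -> triple_derivation J T -> triple_derivable_orth J T.
Proof.
move=> T_lin T_der a b c ab.
by rewrite -T_der ab (semilin0 id1 T_lin).
Qed.

(* (a) => (b), second half: the derivation identity at e = {e,e,e}. *)
Lemma derivation_skew : triple_derivation J T ->
  forall e : E, tripotent J e ->
    forall y : E, peirce2_proj J e (T e) y -> star_e J e y = - y.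
Proof.
move=> T_der e te y [y2 [y1 [y0 [y11 [y00 Te]]]]].
by apply: (skew_of_derivation_identity te _ y2 y11 y00 Te); rewrite -T_der te.
Qed.

Lemma derivable_skew_derivation :
  tripotents_norm_total J -> bounded_linear T -> triple_derivable_orth J T ->
  (forall e : E, tripotent J e ->
    forall y : E, peirce2_proj J e (T e) y -> star_e J e y = - y) ->
  triple_derivation J T.
Proof.
move=> total T_bl T_orth T_skew.
have diag0 x : defect J T x x x = 0.
  apply: (@continuous_vanish_dense _ _ _ (fun x => defect J T x x x)).
    exact: defect_diag_continuous.
  move=> eps eps0.
  have [n [c [u [u_trip [u_orth x_near]]]]] := total x eps eps0.
  exists (\sum_(i < n) c i *: u i); split=> //.
  exact: (defect_diag_combination T_bl.1 T_orth T_skew).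
move=> a b c; apply/eqP; rewrite -subr_eq0; apply/eqP.
exact: (polarization (defect_linl J T_bl.1) (defect_conjm J T_bl.1) (defect_sym J T) diag0).
Qed.
End Directions.

Theorem mainTheorem11 (R : realType) (E : completeNormedModType R[i])
  (J : JBtriple E) (T : E -> E) :
  tripotents_norm_total J ->
  bounded_linear T ->
  (triple_derivation J T <->
   (triple_derivable_orth J T /\
    forall e : E, tripotent J e ->
      forall y : E, peirce2_proj J e (T e) y -> star_e J e y = - y)).
Proof.
move=> total T_bl; split.
  move=> T_der; split; first exact: derivation_derivable_orth T_bl.1 T_der.
  exact: derivation_skew.
by move=> [T_orth T_skew]; apply: derivable_skew_derivation.
Qed.
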